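(* Let $A$ and $B$ be automata and let $(f,n)$ be a normed forward simulation from $A$ to $B$. Then $(A,B)\in f$, i.e., for every execution $\alpha$ of $A$ there is an execution $\alpha'$ of $B$ such that $\alpha$ and $\alpha'$ are $f$-related.
   Context: An automaton $A$ consists of a set $\mathrm{states}(A)$ of states, a nonempty set $\mathrm{start}(A)\subseteq\mathrm{states}(A)$ of start states, a set $\mathrm{acts}(A)$ of actions containing a distinguished internal action $\tau$, and a set $\mathrm{steps}(A)\subseteq\mathrm{states}(A)\times\mathrm{acts}(A)\times\mathrm{states}(A)$ of steps; write $s\xrightarrow{a}_A t$ for $(s,a,t)\in\mathrm{steps}(A)$. An execution fragment of $A$ is a finite or infinite alternating sequence $s_0a_1s_1a_2s_2\cdots$ of states and actions, beginning with a state and, if finite, ending with a state, such that $s_{i-1}\xrightarrow{a_i}_A s_i$ for all $i>0$; its index set $\mathrm{Index}(\alpha)$ is the set of indices $i$ of its states $s_i$. An execution is an execution fragment whose first state is a start state. For a relation $R$ write $R[s]=\{u\mid (s,u)\in R\}$. Execution correspondence: Let $R\subseteq\mathrm{states}(A)\times\mathrm{states}(B)$ and let $\alpha=s_0a_1s_1\cdots$ and $\alpha'=u_0b_1u_1\cdots$ be execution fragments of $A$ and $B$. An index relation over $R$ between $\alpha$ and $\alpha'$ is a relation $I\subseteq\mathrm{Index}(\alpha)\times\mathrm{Index}(\alpha')$ such that (1) $(i,j)\in I$ implies $(s_i,u_j)\in R$; (2) $(i,j)\in I$, $(i',j')\in I$ and $i<i'$ imply $j\le j'$; (3) every index of $\alpha$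 is related by $I$ to some index of $\alpha'$ and every index of $\alpha'$ is related by $I$ to some index of $\alpha$; (4) if $(i,j),(i+1,j+1)\in I$ then $a_{i+1}=b_{j+1}$; if $(i,j),(i+1,j)\in I$ then $a_{i+1}=\tau$; if $(i,j),(i,j+1)\in I$ then $b_{j+1}=\tau$. The fragments $\alpha,\alpha'$ are $R$-related, written $(\alpha,\alpha')\in R$, if such an $I$ exists. Write $(A,B)\in R$ if every execution of $A$ is $R$-related to some execution of $B$. A normed forward simulation from $A$ to $B$ is a pair $(f,n)$ where $f\subseteq\mathrm{states}(A)\times\mathrm{states}(B)$ and $n:\mathrm{steps}(A)\times\mathrm{states}(B)\to S$ for some set $S$ with a well-founded strict order $<$, such that: (1) if $s\in\mathrm{start}(A)$ then $f[s]\cap\mathrm{start}(B)\neq\emptyset$; (2) if $s\xrightarrow{a}_A t$ and $u\in f[s]$ then (a) $u\in f[t]$ and $a=\tau$, or (b) there is $v\in f[t]$ with $u\xrightarrow{a}_B v$, or (c) there is $v\in f[s]$ with $u\xrightarrow{\tau}_B v$ and $n(s\xrightarrow{a}t,v)<n(s\xrightarrow{a}t,u)$. *)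

From Stdlib Require Import Arith Wellfounded.



(* A common universe of actions [L] with the distinguished internal action
   [tau]; each automaton has its own action set acts(A) (a predicate on L)
   containing tau. *)
Record automaton (L : Type) (tau : L) := Automaton {
  states : Type;
  start : states -> Prop;
  start_nonempty : exists s, start s;
  acts : L -> Prop;
  tau_in_acts : acts tau;
  steps : states -> L -> states -> Prop;
  steps_acts : forall s a t, steps s a t -> acts a
}.

Arguments automaton : clear implicits.
Arguments states {L tau}.
Arguments start {L tau}.
Arguments acts {L tau}.
Arguments steps {L tau}.

(* A finite or infinite alternating sequence s0 a1 s1 a2 s2 ...
   [flen = Some n]: finite, states s_0..s_n (actions a_1..a_n);
   [flen = None]  : infinite.  Values of [fst]/[fact] outside the index set
   are irrelevant. *)
Record fragment (S L : Type) := Fragment {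
  flen : option nat;
  fst : nat -> S;
  fact : nat -> L   (* fact i = a_i, meaningful for 1 <= i in Index *)
}.

Arguments fragment : clear implicits.
Arguments flen {S L}.
Arguments fst {S L}.
Arguments fact {S L}.

Definition in_index {S L} (al : fragment S L) (i : nat) : Prop :=
  match flen al with
  | Some n => i <= n
  | None => True
  end.

Definition is_exec_fragment {L tau} (A : automaton L tau)
  (al : fragment (states A) L) : Prop :=
  forall i, in_index al (S i) ->
    steps A (fst al i) (fact al (S i)) (fst al (S i)).

Definition is_execution {L tau} (A : automaton L tau)
  (al : fragment (states A) L) : Prop :=
  is_exec_fragment A al /\ start A (fst al 0).

Definition index_relation {L} (tau : L) {SA SB : Type} (R : SA -> SB -> Prop)
  (al : fragment SA L) (al' : fragment SB L) (I : nat -> nat -> Prop) : Prop :=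
  (forall i j, I i j -> in_index al i /\ in_index al' j) /\
  (forall i j, I i j -> R (fst al i) (fst al' j)) /\
  (forall i j i' j', I i j -> I i' j' -> i < i' -> j <= j') /\
  (forall i, in_index al i -> exists j, I i j) /\
  (forall j, in_index al' j -> exists i, I i j) /\
  (forall i j, I i j -> I (S i) (S j) -> fact al (S i) = fact al' (S j)) /\
  (forall i j, I i j -> I (S i) j -> fact al (S i) = tau) /\
  (forall i j, I i j -> I i (S j) -> fact al' (S j) = tau).

Definition frag_related {L} (tau : L) {SA SB : Type} (R : SA -> SB -> Prop)
  (al : fragment SA L) (al' : fragment SB L) : Prop :=
  exists I, index_relation tau R al al' I.

Definition aut_related {L tau} (A B : automaton L tau)
  (R : states A -> states B -> Prop) : Prop :=
  forall al, is_execution A al ->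
    exists al', is_execution B al' /\ frag_related tau R al al'.

(* Normed forward simulation (f, n) from A to B, with n valued in a set
   [T] carrying a well-founded strict order [lt].  n is given as a function
   on states(A) x acts x states(A) x states(B); only its values on steps of A
   are ever used. *)
Definition normed_forward_simulation {L tau} (A B : automaton L tau)
  (f : states A -> states B -> Prop)
  (T : Type) (lt : T -> T -> Prop)
  (n : states A -> L -> states A -> states B -> T) : Prop :=
  well_founded lt /\
  (forall s, start A s -> exists u, f s u /\ start B u) /\
  (forall s a t u, steps A s a t -> f s u ->
     (f t u /\ a = tau) \/
     (exists v, f t v /\ steps B u a v) \/
     (exists v, f s v /\ steps B u tau v /\ lt (n s a t v) (n s a t u))).

(* Given an execution s_0 a_1 s_1 ... of A and a start state u_0 of B related to s_0,
   build a joint run: at each round B answers the pending step s_i -a-> s_(i+1) of A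
   as the simulation allows, by staying put (a = tau), by taking the same step, or by an
   internal step that keeps the relation with s_i and decreases the norm of the pending
   step.  Well-foundedness of the norm makes A advance after finitely many internal
   steps, so the run covers every index of the execution.  Erasing the rounds in which
   B does not move yields an execution of B, and the pairs (A-index, B-index) visited
   by the run form the index relation. *)
From Stdlib Require Import Arith Classical ClassicalEpsilon Lia.

Definition stepwise (h : nat -> nat) : Prop :=
  forall k, h (S k) = h k \/ h (S k) = S (h k).

Section Stepwise.

Variable h : nat -> nat.
Hypothesis h_step : stepwise h.

Lemma stepwise_mono k k' : k <= k' -> h k <= h k'.
Proof.
  induction 1 as [|m _ IH]; [lia|].
  destruct (h_step m); lia.
Qed.

Lemma stepwise_lt_inv k k' : h k < h k' -> k < k'.
Proof.
  intro H. destruct (le_lt_dec k' k) as [Hle|Hlt]; [|exact Hlt].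
  pose proof (stepwise_mono _ _ Hle). lia.
Qed.

Lemma stepwise_window k k' j : h k <= j < h k' ->
  exists m, k <= m < k' /\ h m = j /\ h (S m) = S j.
Proof.
  intros [Hkj Hjk']. pose proof (stepwise_lt_inv k k' ltac:(lia)) as Hkk'.
  revert Hjk'. induction Hkk' as [|k' Hkk' IH]; intro Hjk'.
  - exists k. destruct (h_step k); repeat split; lia.
  - destruct (le_lt_dec (h k') j).
    + exists k'. destruct (h_step k'); repeat split; lia.
    + destruct (IH ltac:(lia)) as (m & ? & ? & ?). exists m. repeat split; lia.
Qed.

Lemma stepwise_reaches k j : h 0 = 0 -> j <= h k -> exists m, h m = j.
Proof.
  intros h0 Hj. destruct (Nat.eq_dec j (h k)) as [->|Hne]; [now exists k|].
  destruct (stepwise_window 0 k j) as (m & _ & Hm & _); [lia|]. now exists m.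
Qed.

Lemma stepwise_jump_unique m p :
  h (S m) = S (h m) -> h (S p) = S (h p) -> h m = h p -> m = p.
Proof.
  intros Hm Hp Hmp. destruct (lt_eq_lt_dec m p) as [[Hlt|Heq]|Hlt]; [|exact Heq|].
  - pose proof (stepwise_mono (S m) p Hlt). lia.
  - pose proof (stepwise_mono (S p) m Hlt). lia.
Qed.

Lemma stepwise_jump_within k k' m :
  h k' = S (h k) -> k <= m < k' -> h (S m) = S (h m) -> h m = h k.
Proof.
  intros Hk' Hm Hjump.
  pose proof (stepwise_mono k m ltac:(lia)). pose proof (stepwise_mono (S m) k' ltac:(lia)).
  lia.
Qed.

End Stepwise.

Definition attains_max (h : nat -> nat) (J : nat) : Prop :=
  (exists k, h k = J) /\ forall k, h k <= J.

Lemma bounded_attains_max (h : nat -> nat) M :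
  (forall k, h k <= M) -> exists J, attains_max h J.
Proof.
  induction M as [|M IH]; intro HM.
  - exists 0. split.
    + exists 0. specialize (HM 0). lia.
    + exact HM.
  - destruct (classic (exists k, h k = S M)) as [Hreach|Hnot].
    + now exists (S M).
    + apply IH. intro k. specialize (HM k).
      destruct (Nat.eq_dec (h k) (S M)); [exfalso; eauto|lia].
Qed.

(* The fragment visited by [u] when the steps at which [h] stalls are erased:
   its [j]-th state is [u k] for any [k] with [h k = j], and its [j]-th action
   is [lab k] for the step [k] at which [h] reaches [j]. *)
Section Collapse.

Context {SB L : Type}.
Variables (h : nat -> nat) (u : nat -> SB) (lab : nat -> L).

Definition collapse : fragment SB L :=
  Fragment SB L
    (if excluded_middle_informative (exists J, attains_max h J)
     then Some (epsilon (inhabits 0) (attains_max h))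
     else None)
    (fun j => u (epsilon (inhabits 0) (fun k => h k = j)))
    (fun j => lab (epsilon (inhabits 0) (fun k => h k < j /\ h (S k) = j))).

Hypothesis h_step : stepwise h.
Hypothesis h_0 : h 0 = 0.
Hypothesis u_stall : forall k, h (S k) = h k -> u (S k) = u k.

Lemma in_index_collapse j : in_index collapse j <-> exists k, h k = j.
Proof.
  unfold in_index, collapse; simpl.
  destruct (excluded_middle_informative _) as [Hmax|Hnomax].
  - destruct (epsilon_spec (inhabits 0) _ Hmax) as [[k Hk] Hub].
    split.
    + intro Hj. apply (stepwise_reaches h h_step k); [exact h_0|lia].
    + intros [k' <-]. apply Hub.
  - split; [intros _|easy].
    destruct (classic (exists k, j <= h k)) as [[k Hk]|Hsmall].
    + exact (stepwise_reaches h h_step k j h_0 Hk).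
    + exfalso. apply Hnomax, (bounded_attains_max h j). intro k.
      destruct (le_lt_dec (h k) j); [assumption|]. exfalso. apply Hsmall. exists k. lia.
Qed.

Lemma u_level k k' : h k = h k' -> u k = u k'.
Proof.
  assert (forward : forall m m', m <= m' -> h m = h m' -> u m = u m').
  { intros m m' Hle. induction Hle as [|m' Hle IH]; intro Hmm'; [reflexivity|].
    pose proof (stepwise_mono h h_step m m' Hle).
    pose proof (stepwise_mono h h_step m' (S m') ltac:(lia)).
    rewrite u_stall, IH; [reflexivity|lia|lia]. }
  intro Hkk'. destruct (le_lt_dec k k').
  - now apply forward.
  - symmetry. apply forward; [lia|easy].
Qed.

Lemma fst_collapse k : fst collapse (h k) = u k.
Proof.
  simpl. apply u_level, (epsilon_spec (inhabits 0) (fun k' => h k' = h k)). now exists k.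
Qed.

Lemma fact_collapse k : h (S k) = S (h k) -> fact collapse (h (S k)) = lab k.
Proof.
  intro Hjump. simpl.
  destruct (epsilon_spec (inhabits 0) (fun k' => h k' < h (S k) /\ h (S k') = h (S k)))
    as [Hlt Heq]; [exists k; lia|].
  set (p := epsilon _ _) in *.
  f_equal. apply (stepwise_jump_unique h h_step); destruct (h_step p); lia.
Qed.

End Collapse.

Lemma collapse_exec_fragment {L : Type} {tau : L} (B : automaton L tau)
  (h : nat -> nat) (u : nat -> states B) (lab : nat -> L) :
  stepwise h -> h 0 = 0 -> (forall k, h (S k) = h k -> u (S k) = u k) ->
  (forall k, h (S k) = S (h k) -> steps B (u k) (lab k) (u (S k))) ->
  is_exec_fragment B (collapse h u lab).
Proof.
  intros h_step h_0 u_stall u_steps j Hj.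
  apply in_index_collapse in Hj as [k Hk]; try assumption.
  destruct (stepwise_window h h_step 0 k j) as (m & _ & Hm & Hm'); [lia|].
  rewrite <- Hm', <- Hm, !fst_collapse, fact_collapse by (assumption || lia).
  apply u_steps. lia.
Qed.

Section JointRun.

Context {SA SB L : Type} (tau : L) (R : SA -> SB -> Prop) (al : fragment SA L).
Variables (iv jv : nat -> nat) (u : nat -> SB) (lab : nat -> L).

Hypotheses (iv_step : stepwise iv) (jv_step : stepwise jv) (jv_0 : jv 0 = 0).
Hypothesis u_stall : forall k, jv (S k) = jv k -> u (S k) = u k.
Hypothesis run_in_index : forall k, in_index al (iv k).
Hypothesis run_related : forall k, R (fst al (iv k)) (u k).
Hypothesis run_covers : forall i, in_index al i -> exists k, iv k = i.
Hypothesis stay_tau :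
  forall k, iv (S k) = S (iv k) -> jv (S k) = jv k -> fact al (S (iv k)) = tau.
Hypothesis internal_tau :
  forall k, iv (S k) = iv k -> jv (S k) = S (jv k) -> lab k = tau.
Hypothesis step_label :
  forall k, iv (S k) = S (iv k) -> jv (S k) = S (jv k) -> lab k = fact al (S (iv k)).

Definition run_index (i j : nat) : Prop := exists k, iv k = i /\ jv k = j.

Lemma run_index_relation : index_relation tau R al (collapse jv u lab) run_index.
Proof.
  split; [|split; [|split; [|split; [|split; [|split; [|split]]]]]].
  - intros i j (k & <- & <-). split; [apply run_in_index|].
    apply in_index_collapse; eauto.
  - intros i j (k & <- & <-). rewrite fst_collapse by assumption. apply run_related.
  - intros i j i' j' (k & <- & <-) (k' & <- & <-) Hlt.
    apply (stepwise_mono jv jv_step), Nat.lt_le_incl, (stepwise_lt_inv iv iv_step), Hlt.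
  - intros i Hi. destruct (run_covers i Hi) as [k Hk]. exists (jv k), k. auto.
  - intros j Hj. apply in_index_collapse in Hj as [k Hk]; try assumption.
    exists (iv k), k. auto.
  - intros i j (k & <- & <-) (k' & Hik' & Hjk').
    destruct (stepwise_window iv iv_step k k' (iv k)) as (p & Hp & Hip & Hip'); [lia|].
    destruct (stepwise_window jv jv_step k k' (jv k)) as (m & Hm & Hjm & Hjm'); [lia|].
    rewrite <- Hjm', fact_collapse by (assumption || lia).
    destruct (Nat.eq_dec m p) as [<-|Hmp].
    + rewrite step_label by lia. now rewrite Hip.
    + assert (iv_stall : iv (S m) = iv m).
      { destruct (iv_step m) as [|Hjump]; [assumption|].
        exfalso. apply Hmp, (stepwise_jump_unique iv iv_step); try lia.
        rewrite Hip. apply (stepwise_jump_within iv iv_step k k'); lia. }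
      assert (jv_stall : jv (S p) = jv p).
      { destruct (jv_step p) as [|Hjump]; [assumption|].
        exfalso. apply Hmp, (stepwise_jump_unique jv jv_step); try lia.
        rewrite Hjm. symmetry. apply (stepwise_jump_within jv jv_step k k'); lia. }
      rewrite internal_tau, <- Hip, stay_tau by lia. reflexivity.
  - intros i j (k & <- & <-) (k' & Hik' & Hjk').
    destruct (stepwise_window iv iv_step k k' (iv k)) as (p & Hp & Hip & Hip'); [lia|].
    pose proof (stepwise_mono jv jv_step k p ltac:(lia)).
    pose proof (stepwise_mono jv jv_step (S p) k' ltac:(lia)).
    pose proof (stepwise_mono jv jv_step p (S p) ltac:(lia)).
    rewrite <- Hip. apply stay_tau; lia.
  - intros i j (k & <- & <-) (k' & Hik' & Hjk').
    destruct (stepwise_window jv jv_step k k' (jv k)) as (m & Hm & Hjm & Hjm'); [lia|].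
    pose proof (stepwise_mono iv iv_step k m ltac:(lia)).
    pose proof (stepwise_mono iv iv_step (S m) k' ltac:(lia)).
    pose proof (stepwise_mono iv iv_step m (S m) ltac:(lia)).
    rewrite <- Hjm', fact_collapse by (assumption || lia). apply internal_tau; lia.
Qed.

End JointRun.

Lemma in_index_0 {SA L : Type} (al : fragment SA L) : in_index al 0.
Proof. unfold in_index. destruct (flen al); [lia|exact I]. Qed.

Lemma in_index_pred {SA L : Type} (al : fragment SA L) i : in_index al (S i) -> in_index al i.
Proof. unfold in_index. destruct (flen al); [lia|easy]. Qed.

Section Simulation.

Context {L : Type} {tau : L} (A B : automaton L tau).
Variables (f : states A -> states B -> Prop) (T : Type) (lt : T -> T -> Prop)
  (n : states A -> L -> states A -> states B -> T).

Hypothesis lt_wf : well_founded lt.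
Hypothesis f_step : forall s a t u, steps A s a t -> f s u ->
  (f t u /\ a = tau) \/
  (exists v, f t v /\ steps B u a v) \/
  (exists v, f s v /\ steps B u tau v /\ lt (n s a t v) (n s a t u)).

Inductive response := Stay | Step (v : states B) | Internal (v : states B).

Definition valid_response s a t u (r : response) : Prop :=
  match r with
  | Stay => f t u /\ a = tau
  | Step v => f t v /\ steps B u a v
  | Internal v => f s v /\ steps B u tau v /\ lt (n s a t v) (n s a t u)
  end.

Lemma valid_response_exists s a t u :
  steps A s a t -> f s u -> exists r, valid_response s a t u r.
Proof.
  intros Hst Hsu.
  destruct (f_step s a t u Hst Hsu) as [?|[[v ?]|[v ?]]];
    [exists Stay|exists (Step v)|exists (Internal v)]; assumption.
Qed.

Variables (al : fragment (states A) L) (u0 : states B).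
Hypothesis al_exec : is_exec_fragment A al.
Hypothesis f_init : f (fst al 0) u0.

Definition valid_response_at i u : response -> Prop :=
  valid_response (fst al i) (fact al (S i)) (fst al (S i)) u.

(* A configuration of the joint run: [A] is at index [ci] of [al], [B] has made
   [cj] steps and is in state [cu].  Once [ci] is the last index of a finite [al]
   the run stays constant. *)
Record config := Config { ci : nat; cj : nat; cu : states B }.

Definition next_response (c : config) : option response :=
  if excluded_middle_informative (in_index al (S (ci c)))
  then Some (epsilon (inhabits Stay) (valid_response_at (ci c) (cu c)))
  else None.

Definition advance (c : config) (r : option response) : config :=
  match r with
  | None => c
  | Some Stay => Config (S (ci c)) (cj c) (cu c)
  | Some (Step v) => Config (S (ci c)) (S (cj c)) v
  | Some (Internal v) => Config (ci c) (S (cj c)) v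
  end.

Fixpoint run (k : nat) : config :=
  match k with
  | 0 => Config 0 0 u0
  | S k => advance (run k) (next_response (run k))
  end.

Definition run_label (k : nat) : L :=
  match next_response (run k) with
  | Some (Step _) => fact al (S (ci (run k)))
  | _ => tau
  end.

Lemma next_response_valid c r :
  f (fst al (ci c)) (cu c) -> next_response c = Some r ->
  in_index al (S (ci c)) /\ valid_response_at (ci c) (cu c) r.
Proof.
  unfold next_response. intro Hf.
  destruct (excluded_middle_informative _) as [Hi|]; [|discriminate].
  intro E. injection E as <-. split; [exact Hi|].
  apply epsilon_spec, valid_response_exists; [apply al_exec, Hi|exact Hf].
Qed.

Lemma run_invariant k : in_index al (ci (run k)) /\ f (fst al (ci (run k))) (cu (run k)).
Proof.
  induction k as [|k [Hi Hf]]; [split; [apply in_index_0|exact f_init]|].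
  simpl. destruct (next_response (run k)) as [r|] eqn:E; [|easy].
  destruct (next_response_valid _ _ Hf E) as [Hi' Hvalid].
  destruct r; simpl in *; tauto.
Qed.

Lemma run_response k r :
  next_response (run k) = Some r -> valid_response_at (ci (run k)) (cu (run k)) r.
Proof.
  intro E. exact (proj2 (next_response_valid _ _ (proj2 (run_invariant k)) E)).
Qed.

Lemma next_response_some c : in_index al (S (ci c)) -> exists r, next_response c = Some r.
Proof.
  unfold next_response. destruct (excluded_middle_informative _); [eauto|contradiction].
Qed.

Ltac case_response k :=
  let E := fresh "E" in
  simpl; unfold run_label;
  destruct (next_response (run k)) as [[|v|v]|] eqn:E; simpl;
  try apply run_response in E.

Lemma run_ci_stepwise : stepwise (fun k => ci (run k)).
Proof. intro k. case_response k; auto. Qed.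

Lemma run_cj_stepwise : stepwise (fun k => cj (run k)).
Proof. intro k. case_response k; auto. Qed.

Lemma run_cu_stall k : cj (run (S k)) = cj (run k) -> cu (run (S k)) = cu (run k).
Proof. case_response k; intros; solve [reflexivity|lia]. Qed.

Lemma run_stay_tau k : ci (run (S k)) = S (ci (run k)) -> cj (run (S k)) = cj (run k) ->
  fact al (S (ci (run k))) = tau.
Proof. case_response k; intros; try lia. apply E. Qed.

Lemma run_internal_tau k : ci (run (S k)) = ci (run k) -> cj (run (S k)) = S (cj (run k)) ->
  run_label k = tau.
Proof. case_response k; intros; solve [reflexivity|lia]. Qed.

Lemma run_step_label k : ci (run (S k)) = S (ci (run k)) -> cj (run (S k)) = S (cj (run k)) ->
  run_label k = fact al (S (ci (run k))).
Proof. case_response k; intros; solve [reflexivity|lia]. Qed.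

Lemma run_steps k : cj (run (S k)) = S (cj (run k)) ->
  steps B (cu (run k)) (run_label k) (cu (run (S k))).
Proof. case_response k; intros; try lia; apply E. Qed.

(* The norm of the pending step of [A] decreases along internal moves of [B],
   so [A] eventually advances. *)
Lemma run_advances i k : in_index al (S i) -> ci (run k) = i -> exists k', ci (run k') = S i.
Proof.
  intros Hi.
  remember (n (fst al i) (fact al (S i)) (fst al (S i)) (cu (run k))) as x eqn:Hx.
  revert k Hx. induction x as [x IH] using (well_founded_induction lt_wf). intros k Hx Hk.
  subst i. destruct (next_response_some (run k) Hi) as [[|v|v] E].
  - exists (S k). simpl. now rewrite E.
  - exists (S k). simpl. now rewrite E.
  - pose proof (run_response _ _ E) as (_ & _ & Hlt). subst x.
    apply (IH _ Hlt (S k)); simpl; rewrite E; reflexivity.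
Qed.

Lemma run_covers i : in_index al i -> exists k, ci (run k) = i.
Proof.
  induction i as [|i IH]; intro Hi; [now exists 0|].
  destruct (IH (in_index_pred al i Hi)) as [k Hk].
  exact (run_advances i k Hi Hk).
Qed.

Definition simulating_fragment : fragment (states B) L :=
  collapse (fun k => cj (run k)) (fun k => cu (run k)) run_label.

Lemma simulating_fragment_exec : is_exec_fragment B simulating_fragment.
Proof.
  apply collapse_exec_fragment;
    [apply run_cj_stepwise|reflexivity|apply run_cu_stall|apply run_steps].
Qed.

Lemma simulating_fragment_start : fst simulating_fragment 0 = u0.
Proof.
  exact (fst_collapse (fun k => cj (run k)) (fun k => cu (run k)) run_label
           run_cj_stepwise eq_refl run_cu_stall 0).
Qed.

Lemma simulating_fragment_related : frag_related tau f al simulating_fragment.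
Proof.
  eexists. apply run_index_relation.
  - apply run_ci_stepwise.
  - apply run_cj_stepwise.
  - reflexivity.
  - apply run_cu_stall.
  - intro k. apply run_invariant.
  - intro k. apply run_invariant.
  - apply run_covers.
  - apply run_stay_tau.
  - apply run_internal_tau.
  - apply run_step_label.
Qed.

End Simulation.

Theorem mainTheorem1 (L : Type) (tau : L) (A B : automaton L tau)
  (f : states A -> states B -> Prop) (T : Type) (lt : T -> T -> Prop)
  (n : states A -> L -> states A -> states B -> T) :
  normed_forward_simulation A B f T lt n ->
  aut_related A B f.
Proof.
  intros (lt_wf & f_start & f_step) al (al_exec & al_start).
  destruct (f_start _ al_start) as (u0 & f_init & u0_start).
  exists (simulating_fragment A B f T lt n al u0). split; [split|].
  - apply simulating_fragment_exec; assumption.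
  - rewrite simulating_fragment_start by assumption. exact u0_start.
  - apply simulating_fragment_related; assumption.
Qed.
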